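(* For every share function $\rho$, the modified $\rho$-blame $\mathbf{MB}^\rho$ is an unbiased, derivative-dependent importance value function. If moreover there is $0\le\lambda<1$ such that $\rho(k)=\lambda^k$ for all integers $k\ge1$, then $\mathbf{MB}^\rho$ is chain-rule decomposable.
   Context: $X$ is a fixed finite set of $n=|X|$ variables. An assignment over $U\subseteq X$ is a map $\mathbf u:U\to\{0,1\}$; $\mathbf u;\mathbf v$ is concatenation of assignments with disjoint domains, $\mathbf u_S$ is restriction. For $S\subseteq X$ and $\mathbf u$ over $X$, $\mathbf u^{\oplus S}$ flips the values of the variables in $S$. $\mathbb B(X)$ is the set of Boolean functions $\{0,1\}^X\to\{0,1\}$, combined pointwise by $\lor,\land$ (juxtaposition), $\oplus$, negation $\overline f$; a variable $x$ also denotes $\mathbf u\mapsto\mathbf u(x)$; $f\ge g$ is pointwise. Cofactor: $f_{\mathbf v}(\mathbf u)=f(\mathbf v;\mathbf u_{X\setminus V})$ for $\mathbf v$ over $V$; $f_{x/c}$ for $V=\{x\}$. $\mathrm{dep}(f)=\{x: f_{x/1}\ne f_{x/0}\}$; $f$ is monotone in $x$ if $f_{x/1}\ge f_{x/0}$. $f^{\oplus y}(\mathbf u)=f(\mathbf u^{\oplus\{y\}})$. For a permutation $\sigma$ of $X$: $(\sigma\mathbf u)(x)=\mathbf u(\sigma^{-1}(x))$, $(\sigma f)(\mathbf u)=f(\sigma^{-1}\mathbf u)$. $f[x/s]=s f_{x/1}\lor\overline s f_{x/0}$; $\mathrm D_xf=f_{x/1}\oplus f_{x/0}$. Modularity: $f$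 is modular in $g$ if $g$ is not constant and there are $\ell\in\mathbb B(X)$, $z\in X$ with $\mathrm{dep}(\ell)\cap\mathrm{dep}(g)=\emptyset$ and $f=\ell[z/g]$; monotonically modular if moreover $\ell$ is monotone in $z$. Then $f_{g/1}:=\ell_{z/1}$, $f_{g/0}:=\ell_{z/0}$ (well defined), and for a variable $w$, $f[g/w]:=w f_{g/1}\lor\overline w f_{g/0}$. A value function is a map $\mathfrak I:X\times\mathbb B(X)\to\mathbb R$, $(x,f)\mapsto\mathfrak I_x(f)$. It is an importance value function (IVF) if for all $x,y\in X$, permutations $\sigma$ of $X$ and $f,g,h\in\mathbb B(X)$: (Bound) $0\le\mathfrak I_x(f)\le1$; (Dum) $\mathfrak I_x(f)=0$ if $x\notin\mathrm{dep}(f)$; (Dic) $\mathfrak I_x(x)=\mathfrak I_x(\overline x)=1$; (Type) $\mathfrak I_x(f)=\mathfrak I_{\sigma(x)}(\sigma f)$ and $\mathfrak I_x(f)=\mathfrak I_x(f^{\oplus y})$; (ModEC) $\mathfrak I_x(f)\ge\mathfrak I_x(h)$ whenever $f$ and $h$ are monotonically modular in $g$, $f_{g/1}\ge h_{g/1}$, $h_{g/0}\ge f_{g/0}$, and $x\in\mathrm{dep}(g)$. $\mathfrak I$ is unbiased if $\mathfrak I_x(g)=\mathfrak I_x(\overline g)$ for all $x,g$. It is derivative dependent if $\mathrm D_xf\ge\mathrm D_xg\Rightarrow\mathfrak I_x(f)\ge\mathfrak I_x(g)$ for all $f,g,x$; chain-rule decomposable if for all $f$ modular in $g$ and $x\in\mathrm{dep}(g)$: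 $\mathfrak I_x(f)=\mathfrak I_x(g)\,\mathfrak I_g(f)$, where $\mathfrak I_g(f):=\mathfrak I_{x_g}(f[g/x_g])$ for a variable $x_g\notin\mathrm{dep}(f)$. A share function is $\rho:\mathbb N\cup\{\infty\}\to\mathbb R$, monotonically decreasing, with $\rho(\infty)=\lim_{k\to\infty}\rho(k)=0$ and $\rho(0)=1$. For $f$, $x$ and $\mathbf u$ over $X$, $\mathrm{mscs}^{\mathbf u}_x(f)$ is the minimum size of a set $S\subseteq X\setminus\{x\}$ with $f(\mathbf u^{\oplus S})\ne f(\mathbf u^{\oplus(S\cup\{x\})})$ ($\infty$ if none exists). The modified $\rho$-blame is $\mathbf{MB}^\rho_x(f)=\mathbb E_{\mathbf u\in\{0,1\}^X}[\rho(\mathrm{mscs}^{\mathbf u}_x(f))]$ under the uniform distribution. *)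

From HB Require Import structures.
From mathcomp Require Import all_boot all_order all_algebra all_fingroup.
From mathcomp Require Import all_classical all_reals all_analysis.
Set Implicit Arguments. Unset Strict Implicit. Unset Printing Implicit Defensive.
Import Order.TTheory GRing.Theory Num.Theory.
Local Open Scope ring_scope.

Section Defs.
Variable X : finType.

Definition asg := {ffun X -> bool}.
Definition BF := {ffun asg -> bool}.

Definition upd (u : asg) (x : X) (c : bool) : asg :=
  [ffun y => if y == x then c else u y].
Definition flip (u : asg) (S : {set X}) : asg := [ffun y => u y (+) (y \in S)].

Definition cof (f : BF) (x : X) (c : bool) : BF := [ffun u => f (upd u x c)].
Definition dep (f : BF) : {set X} := [set x | cof f x true != cof f x false].
Definition leBF (g f : BF) : Prop := forall u, g u ==> f u.
Definition monotone_in (f : BF) (x : X) : Prop := leBF (cof f x false) (cof f x true).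
Definition var (x : X) : BF := [ffun u : asg => u x].
Definition negBF (f : BF) : BF := [ffun u => ~~ f u].
Definition flipBF (f : BF) (y : X) : BF := [ffun u => f (flip u [set y])].
Definition perm_asg (s : {perm X}) (u : asg) : asg := [ffun x => u (perm_inv s x)].
Definition perm_BF (s : {perm X}) (f : BF) : BF := [ffun u => f (perm_asg (perm_inv s) u)].
Definition subst (f : BF) (x : X) (s : BF) : BF :=
  [ffun u => (s u && cof f x true u) || (~~ s u && cof f x false u)].
Definition Dx (x : X) (f : BF) : BF := [ffun u => cof f x true u (+) cof f x false u].

Definition nonconstant (g : BF) : Prop := exists u v, g u != g v.

Definition modular_wit (f g l : BF) (z : X) : Prop :=
  [/\ nonconstant g, [disjoint dep l & dep g] & f = subst l z g].
Definition modular (f g : BF) : Prop := exists l z, modular_wit f g l z.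
Definition mono_modular_wit (f g l : BF) (z : X) : Prop :=
  modular_wit f g l z /\ monotone_in l z.
(* with witness (l,z): f_{g/1} = l_{z/1}, f_{g/0} = l_{z/0} (well defined),
   f[g/w] = w f_{g/1} \/ ~w f_{g/0} *)
Definition subst_g (l : BF) (z : X) (w : X) : BF :=
  [ffun u : asg => (u w && cof l z true u) || (~~ u w && cof l z false u)].

Definition value_fun (R : realType) := X -> BF -> R.

Definition is_IVF (R : realType) (I : value_fun R) : Prop :=
  [/\ (forall x f, 0 <= I x f <= 1),
      (forall x f, x \notin dep f -> I x f = 0),
      (forall x, I x (var x) = 1 /\ I x (negBF (var x)) = 1),
      (forall x y (s : {perm X}) f,
                   I x f = I (s x) (perm_BF s f) /\ I x f = I x (flipBF f y)) &
      (forall x f h g lf zf lh zh,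
           mono_modular_wit f g lf zf -> mono_modular_wit h g lh zh ->
           leBF (cof lh zh true) (cof lf zf true) ->
           leBF (cof lf zf false) (cof lh zh false) ->
           x \in dep g -> I x h <= I x f)].

Definition unbiased (R : realType) (I : value_fun R) : Prop :=
  forall x g, I x g = I x (negBF g).

Definition derivative_dependent (R : realType) (I : value_fun R) : Prop :=
  forall f g x, leBF (Dx x g) (Dx x f) -> I x g <= I x f.

(* I_g(f) := I_{x_g}(f[g/x_g]) for x_g not in dep f *)
Definition chain_rule_decomposable (R : realType) (I : value_fun R) : Prop :=
  forall f g l z x xg, modular_wit f g l z -> x \in dep g -> xg \notin dep f ->
    I x f = I x g * I xg (subst_g l z xg).

(* mscs^u_x(f) in N \cup {oo}, encoded as option nat (None = oo) *)
Definition mscs_cands (u : asg) (x : X) (f : BF) : {set {set X}} :=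
  [set S : {set X} | (x \notin S) && (f (flip u S) != f (flip u (x |: S)))].
Definition mscs (u : asg) (x : X) (f : BF) : option nat :=
  if [pick S in mscs_cands u x f] is Some S0 then
    Some #|[arg min_(S < S0 in mscs_cands u x f) #|S|]|
  else None.

(* share functions rho : N \cup {oo} -> R (None = oo) *)
Definition share_function (R : realType) (rho : option nat -> R) : Prop :=
  [/\ (forall k m : nat, (k <= m)%N -> rho (Some m) <= rho (Some k)),
      (forall k : nat, rho None <= rho (Some k)),
      rho None = 0,
      ((fun k => rho (Some k)) @ \oo --> 0)%classic &
      rho (Some 0%N) = 1].

Definition MB (R : realType) (rho : option nat -> R) : value_fun R :=
  fun x f => (#|{: asg}|%:R)^-1 * \sum_(u : asg) rho (mscs u x f).

End Defs.

From HB Require Import structures.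
From mathcomp Require Import all_boot all_order all_algebra all_fingroup.
From mathcomp Require Import all_classical all_reals all_analysis.
Import Order.TTheory GRing.Theory Num.Theory.
Local Open Scope ring_scope.
Set Implicit Arguments. Unset Strict Implicit. Unset Printing Implicit Defensive.

(* The whole proof rests on one reformulation of the minimum critical set size:
   since S ∌ x is critical for f at u exactly when D_x f (u^{(+)S}) = 1, and
   D_x f does not depend on x,
       mscs^u_x(f) = min { |S| : D_x f (u^{(+)S}) = 1 }.
   So mscs^u_x(f) only depends on D_x f and is antitone in it.  This yields
   derivative dependence, unbiasedness (D_x ~f = D_x f), Dum (D_x f = 0), Dic
   (mscs = 0 for x, ~x), the invariances of Type (the minimum commutes with
   relabelling and flipping), and ModEC (it reduces to derivative dependence).

   For the chain rule, f = l[z/g] with dep l, dep g disjoint gives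
   D_x f = D_x g /\ D_z l for x in dep g.  The two conjuncts read disjoint sets
   of variables, so the minimal critical size is additive, mscs^u_x(f) =
   mscs^u_x(g) + mscs^u_z(l); rho = lam^k turns this sum into a product, and
   averaging over u factorises since the two factors read disjoint variables.
   Finally I_g(f) = MB_{x_g}(f[g/x_g]) = MB_z(l), as f[g/x_g] is l with z
   renamed to x_g. *)

Section MinimalSize.
Variable X : finType.

Definition msz (C : {set {set X}}) : option nat :=
  if [pick S in C] is Some S0 then Some #|[arg min_(S < S0 in C) #|S|]|
  else None.

Lemma mscs_msz u x f : mscs u x f = msz (mscs_cands u x f).
Proof. by []. Qed.

Variant msz_spec (C : {set {set X}}) : option nat -> Prop :=
| MszNone of (forall S, S \notin C) : msz_spec C None
| MszSome S0 of S0 \in C & (forall S, S \in C -> (#|S0| <= #|S|)%N) :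
    msz_spec C (Some #|S0|).

Lemma mszP C : msz_spec C (msz C).
Proof.
rewrite /msz; case: pickP => [S0 HS0|C0]; last by constructor => S; rewrite C0.
by case: arg_minnP => // S1 HS1 Hmin; constructor.
Qed.

Definition ole (o1 o2 : option nat) : bool :=
  match o2, o1 with
  | None, _ => true
  | Some k2, Some k1 => (k1 <= k2)%N
  | Some _, None => false
  end.

Lemma ole_anti o1 o2 : ole o1 o2 -> ole o2 o1 -> o1 = o2.
Proof.
by case: o1 => [a|]; case: o2 => [b|] //= h1 h2; congr Some; apply/eqP;
  rewrite eqn_leq h1 h2.
Qed.

Lemma msz_dom (C1 C2 : {set {set X}}) :
  (forall S, S \in C2 -> exists2 S', S' \in C1 & (#|S'| <= #|S|)%N) ->
  ole (msz C1) (msz C2).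
Proof.
move=> dom; case: (mszP C2) => [_|S2 HS2 _]; first by case: (msz C1).
have [S' HS' le_S'] := dom _ HS2.
case: (mszP C1) => [C10|S1 _ min1]; first by rewrite (negbTE (C10 S')) in HS'.
exact: leq_trans (min1 _ HS') le_S'.
Qed.

Lemma msz_eq (C1 C2 : {set {set X}}) :
  (forall S, S \in C2 -> exists2 S', S' \in C1 & (#|S'| <= #|S|)%N) ->
  (forall S, S \in C1 -> exists2 S', S' \in C2 & (#|S'| <= #|S|)%N) ->
  msz C1 = msz C2.
Proof. by move=> h1 h2; apply: ole_anti; apply: msz_dom. Qed.

End MinimalSize.

Section Dependence.
Variable X : finType.
Implicit Types (u w : asg X) (f g l F : BF X) (x y z : X).

Lemma upd_id u x : upd u x (u x) = u.
Proof. by apply/ffunP => y; rewrite ffunE; case: eqP => [->|]. Qed.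

Lemma upd_upd u x c d : upd (upd u x d) x c = upd u x c.
Proof. by apply/ffunP => y; rewrite !ffunE; case: (y == x). Qed.

Lemma upd_comm u x y c d : x != y -> upd (upd u x c) y d = upd (upd u y d) x c.
Proof.
move=> nxy; apply/ffunP => t; rewrite !ffunE.
by case: (eqVneq t y) => [->|//]; rewrite eq_sym (negbTE nxy).
Qed.

Lemma nodepE F x : x \notin dep F <-> forall w, F (upd w x true) = F (upd w x false).
Proof.
rewrite inE negbK; split => [/eqP/ffunP E w|E]; first by have := E w; rewrite !ffunE.
by apply/eqP/ffunP => w; rewrite !ffunE.
Qed.

Lemma nodep_upd F x : x \notin dep F -> forall w d, F (upd w x d) = F w.
Proof.
move/nodepE => E w d; rewrite -{2}(upd_id w x).
by case: d; case: (w x); rewrite ?E.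
Qed.

Lemma nodep_cof l z c x : x \notin dep l -> x \notin dep (cof l z c).
Proof.
move=> xNl; apply/nodepE => w; rewrite !ffunE.
case: (eqVneq x z) => [->|nxz]; first by rewrite !upd_upd.
by rewrite !(upd_comm _ _ _ nxz) !(nodep_upd xNl).
Qed.

Lemma dep_agree F u u' : (forall y, y \in dep F -> u y = u' y) -> F u = F u'.
Proof.
move Hn: #|[set y | u y != u' y]| => n.
elim: n u Hn => [|n IH] u Hn agree.
  suff -> : u = u' by [].
  apply/ffunP => y; apply/eqP; apply: contraT => Hy.
  by move/eqP: Hn; rewrite cards_eq0 => /eqP/setP/(_ y); rewrite !inE Hy.
have [y Hy] : exists y, y \in [set y | u y != u' y].
  by apply/set0Pn; rewrite -cards_eq0 Hn.
have yNF : y \notin dep F.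
  by apply: contraT; rewrite negbK => /agree; move: Hy; rewrite inE => /eqP.
rewrite -(nodep_upd yNF u (u' y)); apply: IH => [|t Ht]; last first.
  by rewrite ffunE; case: eqP => [->//|_]; apply: agree.
rewrite (cardsD1 y) Hy add1n in Hn; case: Hn => <-.
apply: eq_card => t; rewrite !inE ffunE.
by case: (eqVneq t y) => [->|]; rewrite ?eqxx.
Qed.

Definition depends_only (T : Type) (p : asg X -> T) (A : {set X}) : Prop :=
  forall u u' : asg X, (forall y, y \in A -> u y = u' y) -> p u = p u'.

Lemma depends_only_sub (T : Type) (D : asg X -> T) (A B : {set X}) :
  A \subset B -> depends_only D A -> depends_only D B.
Proof.
by move=> /fintype.subsetP AB DA u u' agree; apply: DA => y /AB; apply: agree.
Qed.

Lemma Dx_depends_only F x : depends_only (Dx x F) (dep F).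
Proof.
move=> u u' agree; rewrite !ffunE; congr (_ (+) _); apply: dep_agree => y yF;
by rewrite !ffunE agree.
Qed.

Lemma DxE x F w : Dx x F w = F (upd w x true) (+) F (upd w x false).
Proof. by rewrite !ffunE. Qed.

Lemma Dx_upd x f w c : Dx x f (upd w x c) = Dx x f w.
Proof. by rewrite !ffunE !upd_upd. Qed.

Lemma Dx_nodep x f : x \notin dep f -> Dx x f = [ffun=> false].
Proof.
by rewrite inE negbK => /eqP E; apply/ffunP => w; rewrite ffunE E addbb ffunE.
Qed.

Lemma Dx_neg x g : Dx x (negBF g) = Dx x g.
Proof. by apply/ffunP => w; rewrite !ffunE addbN addNb negbK. Qed.

Lemma Dx_flip1 x f w : (f w != f (upd w x (~~ w x))) = Dx x f w.
Proof.
rewrite !ffunE -{1}(upd_id w x).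
by case: (w x); case: (f (upd w x true)); case: (f (upd w x false)).
Qed.

End Dependence.

Section CriticalSets.
Variable X : finType.
Implicit Types (u w : asg X) (f g F : BF X) (x y : X) (S T : {set X}).

Definition flips_into (D : BF X) u : {set {set X}} := [set S | D (flip u S)].

Lemma flip_setU1 u x S : x \notin S ->
  flip u (x |: S) = upd (flip u S) x (~~ flip u S x).
Proof.
move=> xNS; apply/ffunP => y; rewrite !ffunE !inE.
by case: (eqVneq y x) => [->|//]; rewrite (negbTE xNS) addbT addbF.
Qed.

Lemma flip_setD1 u x S : flip u (S :\ x) = upd (flip u S) x (u x).
Proof.
apply/ffunP => y; rewrite !ffunE !inE.
by case: (eqVneq y x) => [->|]; rewrite ?addbF.
Qed.

Lemma flipC u S T : flip (flip u S) T = flip (flip u T) S.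
Proof. by apply/ffunP => y; rewrite !ffunE -!addbA [(_ \in T) (+) _]addbC. Qed.

Lemma flipK u S : flip (flip u S) S = u.
Proof. by apply/ffunP => y; rewrite !ffunE -addbA addbb addbF. Qed.

Lemma flip_inj S : injective (fun u => flip u S).
Proof. by move=> u u' /(congr1 (fun w => flip w S)); rewrite !flipK. Qed.

Lemma mscs_Dx u x f : mscs u x f = msz (flips_into (Dx x f) u).
Proof.
rewrite mscs_msz; apply: msz_eq => S; rewrite inE.
  move=> DS; exists (S :\ x); last by rewrite subset_leq_card // subD1set.
  by rewrite inE setD11 flip_setU1 ?setD11 // Dx_flip1 flip_setD1 Dx_upd.
by case/andP=> xNS crit; exists S; rewrite // inE -Dx_flip1 -flip_setU1.
Qed.

Lemma flips_into_sub (D1 D2 : BF X) u : (forall w, D1 w -> D2 w) ->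
  ole (msz (flips_into D2 u)) (msz (flips_into D1 u)).
Proof.
by move=> D12; apply: msz_dom => S; rewrite inE => DS; exists S; rewrite ?inE ?D12.
Qed.

Lemma flips_into_ext (D1 D2 : BF X) u u' :
  (forall S, D1 (flip u S) = D2 (flip u' S)) ->
  msz (flips_into D1 u) = msz (flips_into D2 u').
Proof. by move=> E; congr msz; apply/setP => S; rewrite !inE E. Qed.

Lemma mscs_neg u x g : mscs u x (negBF g) = mscs u x g.
Proof. by rewrite !mscs_Dx Dx_neg. Qed.

Lemma mscs_nodep u x f : x \notin dep f -> mscs u x f = None.
Proof.
by move=> xNf; rewrite mscs_Dx Dx_nodep //; case: mszP => // S; rewrite inE ffunE.
Qed.

Lemma mscs_var u x : mscs u x (var x) = Some 0%N.
Proof.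
have set0_in : finset.set0 \in flips_into (Dx x (var x)) u by rewrite inE !ffunE !eqxx.
rewrite mscs_Dx; case: mszP => [/(_ finset.set0)|S0 _ min0]; first by rewrite set0_in.
by have := min0 _ set0_in; rewrite cards0 leqn0 => /eqP ->.
Qed.

Lemma mscs_flipBF u x f y : mscs u x (flipBF f y) = mscs (flip u [set y]) x f.
Proof.
by rewrite !mscs_msz; congr msz; apply/setP => S; rewrite !inE !ffunE !(flipC _ [set y]).
Qed.

Lemma perm_invK (s : {perm X}) y : perm_inv (perm_inv s) y = s y.
Proof. by apply: (@perm_inj _ (perm_inv s)); rewrite permKV permK. Qed.

Lemma perm_asg_inj (s : {perm X}) : injective (perm_asg s).
Proof.
move=> u u' /(congr1 (fun w : asg X => w (s _))) E; apply/ffunP => y.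
by have := E y; rewrite !ffunE !permK.
Qed.

Lemma mscs_cands_perm (s : {perm X}) u x f S :
  (S \in mscs_cands (perm_asg s u) (s x) (perm_BF s f)) =
  (s @^-1: S \in mscs_cands u x f).
Proof.
have E T : perm_BF s f (flip (perm_asg s u) T) = f (flip u (s @^-1: T)).
  by rewrite ffunE; congr (fun_of_fin f); apply/ffunP => y;
     rewrite !ffunE perm_invK permK !inE.
have preim_U1 : s @^-1: (s x |: S) = x |: s @^-1: S.
  by apply/setP => y; rewrite !inE (inj_eq perm_inj).
by rewrite !inE !E preim_U1.
Qed.

Lemma mscs_perm (s : {perm X}) u x f :
  mscs (perm_asg s u) (s x) (perm_BF s f) = mscs u x f.
Proof.
rewrite !mscs_msz; apply: msz_eq => S HS.
  exists (perm_inv s @^-1: S); last by rewrite card_preimset //; apply: perm_inj.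
  have preimK : s @^-1: (perm_inv s @^-1: S) = S.
    by apply/setP => y; rewrite !inE permK.
  by rewrite mscs_cands_perm preimK.
exists (s @^-1: S); last by rewrite card_preimset //; apply: perm_inj.
by rewrite -mscs_cands_perm.
Qed.

Lemma flip_restrict (D : BF X) A u S :
  depends_only D A -> D (flip u S) = D (flip u (S :&: A)).
Proof. by move=> DA; apply: DA => y yA; rewrite !ffunE !inE yA andbT. Qed.

Definition oadd (o1 o2 : option nat) : option nat :=
  match o1, o2 with Some a, Some b => Some (a + b)%N | _, _ => None end.

Section Additivity.
Variables (D1 D2 : BF X) (G : {set X}) (u : asg X).
Hypotheses (D1G : depends_only D1 G) (D2G : depends_only D2 (~: G)).

Let D12 : BF X := [ffun w => D1 w && D2 w].

(* Critical sets of a conjunction of derivatives on disjoint variable sets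
   split into a critical set of each conjunct, and conversely glue. *)
Lemma msz_and_split :
  msz (flips_into D12 u) = oadd (msz (flips_into D1 u)) (msz (flips_into D2 u)).
Proof.
have split12 S : S \in flips_into D12 u ->
    S :&: G \in flips_into D1 u /\ S :&: ~: G \in flips_into D2 u.
  by rewrite !inE ffunE (flip_restrict u S D1G) (flip_restrict u S D2G) => /andP.
case: (mszP (flips_into D1 u)) => [N1|S1 HS1 min1].
  by case: mszP => // S /split12 [S1 _]; have := N1 (S :&: G); rewrite S1.
case: (mszP (flips_into D2 u)) => [N2|S2 HS2 min2].
  by case: mszP => // S /split12 [_ S2]; have := N2 (S :&: ~: G); rewrite S2.
pose S := (S1 :&: G) :|: (S2 :&: ~: G).
have SG : S :&: G = S1 :&: G.
  by rewrite finset.setIUl -!finset.setIA finset.setIid [~: G :&: G]finset.setIC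
     finset.setICr finset.setI0 finset.setU0.
have SNG : S :&: ~: G = S2 :&: ~: G.
  by rewrite finset.setIUl -!finset.setIA finset.setIid finset.setICr finset.setI0
     finset.set0U.
have HS : S \in flips_into D12 u.
  move: HS1 HS2; rewrite !inE ffunE (flip_restrict u S1 D1G) (flip_restrict u S2 D2G).
  by rewrite (flip_restrict u S D1G) (flip_restrict u S D2G) SG SNG => -> ->.
case: (mszP (flips_into D12 u)) => [/(_ S)/negP //|S0 HS0 min0].
congr Some; apply/eqP; rewrite eqn_leq; apply/andP; split.
  apply: leq_trans (min0 _ HS) (leq_trans (leq_card_setU _ _) _).
  by apply: leq_add; apply: subset_leq_card; apply: subsetIl.
have [H1 H2] := split12 _ HS0.
by rewrite -(cardsID G S0) finset.setDE; apply: leq_add; [apply: min1|apply: min2].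
Qed.

End Additivity.

End CriticalSets.

Section Averaging.
Variable X : finType.

Definition merge (G : {set X}) (v w : asg X) : asg X :=
  [ffun y => if y \in G then v y else w y].

(* Functions reading complementary sets of variables are independent under the
   uniform distribution: E[p1 p2] = E[p1] E[p2], stated without division. *)
Lemma sum_mul_indep (R : comPzRingType) (G : {set X}) (p1 p2 : asg X -> R) :
  depends_only p1 G -> depends_only p2 (~: G) ->
  (\sum_u p1 u * p2 u) * #|{: asg X}|%:R = (\sum_u p1 u) * (\sum_u p2 u).
Proof.
move=> p1G p2G; symmetry.
rewrite [LHS]mulr_suml; under eq_bigr do rewrite mulr_sumr.
have merge_pair v w : p1 v * p2 w = p1 (merge G v w) * p2 (merge G v w).
  congr (_ * _); [apply: p1G => y yG|apply: p2G => y; rewrite inE => /negbTE yG];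
  by rewrite ffunE yG.
under eq_bigr do under eq_bigr do rewrite merge_pair.
rewrite pair_bigA /=.
pose swap (p : asg X * asg X) := (merge G p.1 p.2, merge G p.2 p.1).
have swapK : involutive swap.
  by move=> [v w]; congr pair; apply/ffunP => y; rewrite !ffunE; case: (y \in G).
rewrite (reindex_inj (inv_inj swapK)) /=.
have merge_swap (p : asg X * asg X) : merge G (swap p).1 (swap p).2 = p.1.
  by apply/ffunP => y; rewrite !ffunE; case: (y \in G).
under eq_bigr do rewrite merge_swap.
rewrite -(pair_bigA _ (fun v w => p1 v * p2 v)) /= mulr_suml.
by apply: eq_bigr => v _; rewrite sumr_const mulr_natr cardT.
Qed.

End Averaging.

Section Modularity.
Variable X : finType.
Implicit Types (u w : asg X) (f g l : BF X) (x z : X).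

Lemma substE l z g w : subst l z g w = cof l z (g w) w.
Proof. by rewrite [subst _ _ _ _]ffunE; case: (g w); rewrite ?orbF. Qed.

Lemma Dx_subst x l z g : x \notin dep l ->
  Dx x (subst l z g) = [ffun w => Dx x g w && Dx z l w].
Proof.
move=> xNl; apply/ffunP => w.
have cof_nodep c d : cof l z c (upd w x d) = cof l z c w.
  exact: nodep_upd (nodep_cof z c xNl) w d.
have subst_upd d : subst l z g (upd w x d) = cof l z (g (upd w x d)) w.
  by rewrite substE cof_nodep.
rewrite [RHS]ffunE !DxE !subst_upd !ffunE.
by case: (g (upd w x true)); case: (g (upd w x false));
   case: (l (upd w z true)); case: (l (upd w z false)).
Qed.

Lemma nonconstant_attains g c : nonconstant g -> exists v, g v = c.
Proof.
case=> u1 [u2 g12]; case E1: (g u1 == c); first by exists u1; apply/eqP.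
by exists u2; move: g12 E1; case: (g u1); case: (g u2); case: c.
Qed.

(* If f = l[z/g] does not depend on x_g, neither do the cofactors l_{z/c}:
   for x_g in dep g this is disjointness, otherwise fix g to c by choosing the
   variables of g, and read l_{z/c} off f. *)
Lemma modular_cof_nodep f g l z xg c : modular_wit f g l z ->
  xg \notin dep f -> xg \notin dep (cof l z c).
Proof.
case=> gnc disj ->; case: (boolP (xg \in dep g)) => [xg_g|xgNg] xgNf.
  by apply: nodep_cof; rewrite (disjointFl disj xg_g).
have [v gv] := nonconstant_attains c gnc.
have cofNg y : y \in dep (cof l z c) -> y \notin dep g.
  move=> yc; have yl : y \in dep l by apply: contraTT yc; apply: nodep_cof.
  by rewrite (disjointFr disj yl).
apply/nodepE => w; pose w' := merge (dep g) v w.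
have f_w' d : subst l z g (upd w' xg d) = cof l z c (upd w xg d).
  have gc : g (upd w' xg d) = c.
    by rewrite (nodep_upd xgNg) -gv; apply: dep_agree => y yg; rewrite ffunE yg.
  by rewrite substE gc; apply: dep_agree => y /cofNg yNg; rewrite !ffunE (negbTE yNg).
by rewrite -!f_w'; move/nodepE: xgNf; apply.
Qed.

(* f[g/x_g] is l with z renamed to x_g, so it has the same critical sizes. *)
Lemma mscs_subst_g f g l z xg u : modular_wit f g l z -> xg \notin dep f ->
  mscs u xg (subst_g l z xg) = mscs u z l.
Proof.
move=> fgl xgNf; rewrite !mscs_Dx; congr msz; congr flips_into.
apply/ffunP => w.
have cof_nodep c d : cof l z c (upd w xg d) = cof l z c w.
  exact: nodep_upd (modular_cof_nodep c fgl xgNf) w d.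
have subst_g_upd d : subst_g l z xg (upd w xg d) = cof l z d w.
  rewrite [subst_g _ _ _ _]ffunE !cof_nodep [upd _ _ _ _]ffunE eqxx.
  by case: d; rewrite ?orbF.
by rewrite DxE !subst_g_upd [RHS]ffunE.
Qed.

End Modularity.

Section Blame.
Variables (R : realType) (X : finType) (rho : option nat -> R).
Hypothesis rho_share : share_function rho.
Implicit Types (u w : asg X) (f g h l : BF X) (x y z : X).

Local Notation MBr := (@MB X R rho).
Local Notation N := (#|{: asg X}|%:R : R).

Lemma N_gt0 : 0 < N.
Proof. by rewrite ltr0n; apply/card_gt0P; exists [ffun=> true]. Qed.

Lemma MBE x f : MBr x f = N^-1 * \sum_u rho (mscs u x f).
Proof. by []. Qed.

Lemma rho_ole o1 o2 : ole o1 o2 -> rho o2 <= rho o1.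
Proof.
case: rho_share => anti le_oo _ _ _.
by case: o2 => [k2|]; case: o1 => [k1|] //= /anti.
Qed.

Lemma rho_bound o : 0 <= rho o <= 1.
Proof.
case: rho_share => anti le_oo rho_oo _ rho0.
case: o => [k|]; last by rewrite rho_oo lexx ler01.
by rewrite -rho_oo le_oo -rho0 anti.
Qed.

Lemma MB_bound x f : 0 <= MBr x f <= 1.
Proof.
rewrite MBE; apply/andP; split.
  apply: mulr_ge0; first by rewrite invr_ge0 ltW ?N_gt0.
  apply: sumr_ge0 => u _.
  by case/andP: (rho_bound (mscs u x f)).
rewrite ler_pdivrMl ?N_gt0 // mulr1 -sumr_const.
by apply: ler_sum => u _; case/andP: (rho_bound (mscs u x f)).
Qed.

Lemma MB_dummy x f : x \notin dep f -> MBr x f = 0.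
Proof.
case: rho_share => _ _ rho_oo _ _ xNf.
by rewrite MBE big1 ?mulr0 // => u _; rewrite mscs_nodep.
Qed.

Lemma MB_dictator x : MBr x (var x) = 1 /\ MBr x (negBF (var x)) = 1.
Proof.
case: rho_share => _ _ _ _ rho0.
suff MB_var : MBr x (var x) = 1.
  by split=> //; rewrite MBE; under eq_bigr do rewrite mscs_neg; exact: MB_var.
rewrite MBE; under eq_bigr do rewrite mscs_var rho0.
by rewrite sumr_const mulVf // lt0r_neq0 // N_gt0.
Qed.

Lemma MB_perm x (s : {perm X}) f : MBr x f = MBr (s x) (perm_BF s f).
Proof.
rewrite !MBE; congr (_ * _); rewrite [RHS](reindex_inj (@perm_asg_inj _ s)).
by apply: eq_bigr => u _; rewrite mscs_perm.
Qed.

Lemma MB_flip x y f : MBr x f = MBr x (flipBF f y).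
Proof.
rewrite !MBE; congr (_ * _); under [RHS]eq_bigr do rewrite mscs_flipBF.
rewrite [RHS](reindex_inj (@flip_inj _ [set y])).
by apply: eq_bigr => u _; rewrite flipK.
Qed.

(* Unbiasedness, since D_x ~g = D_x g. *)
Lemma MB_unbiased : unbiased MBr.
Proof.
by move=> x g; rewrite !MBE; congr (_ * _); apply: eq_bigr => u _; rewrite mscs_neg.
Qed.

(* Derivative dependence: a pointwise larger D_x f has smaller critical sizes. *)
Lemma MB_derivative_dependent : derivative_dependent MBr.
Proof.
move=> f g x le_D; rewrite !MBE ler_pM2l ?invr_gt0 ?N_gt0 //.
apply: ler_sum => u _; rewrite !mscs_Dx; apply/rho_ole/flips_into_sub => w.
exact/implyP/le_D.
Qed.

(* (ModEC) follows from derivative dependence, since D_x (l[z/g]) =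
   D_x g /\ D_z l and monotonicity in z makes D_z l = l_{z/1} /\ ~ l_{z/0}. *)
Lemma MB_ModEC x f h g lf zf lh zh :
  mono_modular_wit f g lf zf -> mono_modular_wit h g lh zh ->
  leBF (cof lh zh true) (cof lf zf true) ->
  leBF (cof lf zf false) (cof lh zh false) ->
  x \in dep g -> MBr x h <= MBr x f.
Proof.
move=> [[_ disjf ->] monf] [[_ disjh ->] monh] le1 le0 xg.
have xNlf : x \notin dep lf by rewrite (disjointFl disjf xg).
have xNlh : x \notin dep lh by rewrite (disjointFl disjh xg).
apply: MB_derivative_dependent => w; rewrite !Dx_subst //.
move: (le1 w) (le0 w) (monf w) (monh w); rewrite !ffunE.
by case: (g (upd w x true)); case: (g (upd w x false));
   case: (lf (upd w zf true)); case: (lf (upd w zf false));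
   case: (lh (upd w zh true)); case: (lh (upd w zh false)).
Qed.

Lemma MB_IVF : is_IVF MBr.
Proof.
split; [exact: MB_bound|exact: MB_dummy|exact: MB_dictator| |exact: MB_ModEC].
by move=> x y s f; split; [apply: MB_perm|apply: MB_flip].
Qed.

Section Geometric.
Variable lam : R.
Hypothesis rho_geom : forall k : nat, (1 <= k)%N -> rho (Some k) = lam ^+ k.

Lemma rho_oadd o1 o2 : rho (oadd o1 o2) = rho o1 * rho o2.
Proof.
case: rho_share => _ _ rho_oo _ rho0.
have rho_pow k : rho (Some k) = lam ^+ k by case: k => [|k]; rewrite ?rho0 ?rho_geom.
by case: o1 => [a|]; case: o2 => [b|]; rewrite /= ?rho_oo ?mul0r ?mulr0 // !rho_pow exprD.
Qed.

(* MB_x(l[z/g]) = MB_x(g) MB_z(l): the critical sizes add up and the two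
   summands read disjoint sets of variables, hence are independent. *)
Lemma MB_modular f g l z x : modular_wit f g l z -> x \in dep g ->
  MBr x f = MBr x g * MBr z l.
Proof.
move=> [_ disj ->] xg.
have xNl : x \notin dep l by rewrite (disjointFl disj xg).
have D1G : depends_only (Dx x g) (dep g) by apply: Dx_depends_only.
have D2G : depends_only (Dx z l) (~: dep g).
  by apply: depends_only_sub (@Dx_depends_only _ l z); rewrite -finset.disjoints_subset.
pose p1 u := rho (mscs u x g); pose p2 u := rho (mscs u z l).
have mscs_f u : rho (mscs u x (subst l z g)) = p1 u * p2 u.
  by rewrite mscs_Dx Dx_subst // (msz_and_split _ D1G D2G) rho_oadd -!mscs_Dx.
have p1G : depends_only p1 (dep g).
  move=> u u' agree; rewrite /p1 !mscs_Dx; congr rho; apply: flips_into_ext => S.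
  by apply: D1G => y yg; rewrite !ffunE agree.
have p2G : depends_only p2 (~: dep g).
  move=> u u' agree; rewrite /p2 !mscs_Dx; congr rho; apply: flips_into_ext => S.
  by apply: D2G => y yg; rewrite !ffunE agree.
have N_neq0 : N != 0 by rewrite lt0r_neq0 ?N_gt0.
rewrite !MBE; under eq_bigr do rewrite mscs_f.
rewrite -[\sum_u _](mulfK N_neq0) (sum_mul_indep p1G p2G).
by rewrite [RHS]mulrACA [LHS]mulrCA mulrC.
Qed.

Lemma MB_chain_rule : chain_rule_decomposable MBr.
Proof.
move=> f g l z x xg fgl xdg xgNf; rewrite (MB_modular fgl xdg) !MBE.
by congr (_ * (_ * _)); apply: eq_bigr => u _; rewrite (mscs_subst_g u fgl xgNf).
Qed.

End Geometric.

End Blame.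

Theorem mainTheorem5 (R : realType) (X : finType) (rho : option nat -> R) :
  share_function rho ->
  [/\ is_IVF (@MB X R rho), unbiased (@MB X R rho) & derivative_dependent (@MB X R rho)] /\
  ((exists lam : R, 0 <= lam < 1 /\
      forall k : nat, (1 <= k)%N -> rho (Some k) = lam ^+ k) ->
   chain_rule_decomposable (@MB X R rho)).
Proof.
move=> rho_share; split.
  by split; [apply: MB_IVF|apply: MB_unbiased|apply: MB_derivative_dependent].
by case=> lam [_ rho_geom]; apply: (MB_chain_rule rho_share rho_geom).
Qed.
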